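(* For any tournament $\mathrel{W}$ and any ranking $R$ that is both $\mathrel{W}$-feasible and $\mathrel{W}$-efficient, there exists a regret-free strategy whose outcome under $\mathrel{W}$ is $R$.
   Context: Let $\mathcal{X}$ be a finite set of alternatives. A proto-ranking is an irreflexive and transitive binary relation on $\mathcal{X}$; a ranking is a total proto-ranking; a tournament is a total and asymmetric binary relation on $\mathcal{X}$. The chair has a fixed preference $\succ$, a ranking on $\mathcal{X}$. Interaction: given a tournament $\mathrel{W}$, set $R_0=\varnothing$; in each period $t\geq1$ with $R_{t-1}$ not total, the chair offers a pair $\{x,y\}$ of distinct alternatives unranked by $R_{t-1}$, the winner is $x$ if $x\mathrel{W}y$ and $y$ otherwise, and $R_t$ is the transitive closure of $R_{t-1}\cup\{(\text{winner},\text{loser})\}$; stop when $R_t$ is total. A history is a sequence of (winner, loser) pairs that can arise this way; a strategy assigns to each non-terminal history a pair unranked at it. The outcome of $\sigma$ under $\mathrel{W}$ is the final ranking. A ranking is $\mathrel{W}$-feasible if it is the outcome under $\mathrel{W}$ of some strategy. $R$ is more aligned with $\succ$ than $R'$ if for all $x\succ y$, $xR'y$ implies $xRy$. A ranking is $\mathrel{W}$-unimprovable if no other $\mathrel{W}$-feasible ranking is more aligned with $\succ$. A strategy is regret-free if for every tournament $\mathrel{W}$ its outcome under $\mathrel{W}$ is $\mathrel{W}$-unimprovable. A ranking $R$ is $\mathrel{W}$-efficient if $x\succ y$ and $x\mathrel{W}y$ imply $xRy$. *)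

From mathcomp Require Import all_boot.
Set Implicit Arguments. Unset Strict Implicit. Unset Printing Implicit Defensive.

Section Chair.
Variable X : finType.

Definition tclose (R : rel X) : rel X :=
  fun x y => [exists z, R x z && connect R z y].

Definition irreflexiveb (R : rel X) : bool := [forall x, ~~ R x x].
Definition transitiveb (R : rel X) : bool :=
  [forall x, forall y, forall z, R x y ==> R y z ==> R x z].
Definition totalb (R : rel X) : bool :=
  [forall x, forall y, (x != y) ==> R x y || R y x].
Definition asymmetricb (R : rel X) : bool :=
  [forall x, forall y, R x y ==> ~~ R y x].

Definition proto_ranking (R : rel X) : bool := irreflexiveb R && transitiveb R.
Definition ranking (R : rel X) : bool := proto_ranking R && totalb R.
Definition tournament (W : rel X) : bool := totalb W && asymmetricb W.

Definition unranked (R : rel X) (x y : X) : bool :=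
  [&& x != y, ~~ R x y & ~~ R y x].

(* relation after a sequence of (winner, loser) pairs:
   R_0 = empty, R_t = transitive closure of R_{t-1} U {(winner, loser)} *)
Definition relh (h : seq (X * X)) : rel X :=
  foldl (fun R p => tclose (fun x y => R x y || ((x, y) == p)))
        (fun _ _ => false) h.

Definition is_history (h : seq (X * X)) : Prop :=
  forall h1 p h2, h = h1 ++ p :: h2 ->
    ~~ totalb (relh h1) && unranked (relh h1) p.1 p.2.

(* a strategy maps histories to an (unordered, represented as ordered) pair *)
Definition strategy := seq (X * X) -> X * X.

Definition valid_strategy (s : strategy) : Prop :=
  forall h, is_history h -> ~~ totalb (relh h) ->
    unranked (relh h) (s h).1 (s h).2.

Definition play (W : rel X) (p : X * X) : X * X :=
  if W p.1 p.2 then p else (p.2, p.1).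

Definition generated (s : strategy) (W : rel X) (h : seq (X * X)) : Prop :=
  forall h1 p h2, h = h1 ++ p :: h2 ->
    ~~ totalb (relh h1) /\ p = play W (s h1).

Definition outcome (s : strategy) (W : rel X) (R : rel X) : Prop :=
  exists h, generated s W h /\ totalb (relh h) /\ relh h =2 R.

Definition feasible (W R : rel X) : Prop :=
  exists s, valid_strategy s /\ outcome s W R.

Variable pref : rel X.

Definition more_aligned (R R' : rel X) : Prop :=
  forall x y, pref x y -> R' x y -> R x y.

Definition unimprovable (W R : rel X) : Prop :=
  forall R', feasible W R' -> more_aligned R' R -> R' =2 R.

Definition regret_free (s : strategy) : Prop :=
  forall W, tournament W -> forall R, outcome s W R -> unimprovable W R.

Definition efficient (W R : rel X) : Prop :=
  forall x y, pref x y -> W x y -> R x y.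

End Chair.

(* The chair sorts by adjacent transpositions. The completion of the current relation Q orders
   every Q-unranked pair by pref, and the chair only offers Q-unranked pairs that are adjacent in
   this completion. Whatever the tournament, the result either confirms the completion or swaps two
   neighbours in it, so the completion stays a ranking and a pair can end up ranked against pref
   only if it was offered and won directly. The outcome is therefore efficient, and efficient
   rankings are unimprovable: a minimal inversion between an efficient ranking and a more aligned
   feasible one would be a covering pair of the latter, hence decided directly by the tournament.
   To reach R, the chair prefers adjacent pairs whose result agrees with R. While the completion
   inverts a pair of R, a minimal inversion is adjacent and ordered by pref, so efficiency of R
   makes the tournament decide it as R does; once the completion is contained in R, a minimal
   R-pair that is still unranked covers in R, and covering pairs of a feasible ranking are won
   directly. *)

From mathcomp Require Import all_boot perm.
Set Implicit Arguments. Unset Strict Implicit. Unset Printing Implicit Defensive.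

Section Relations.
Variable X : finType.
Implicit Types (S T Q : rel X) (x y z : X).

Definition covers S x y := S x y && [forall z, ~~ (S x z && S z y)].

Lemma eq_covers S T : S =2 T -> covers S =2 covers T.
Proof.
by move=> E x y; rewrite /covers E; congr (_ && _); apply: eq_forallb => z; rewrite !E.
Qed.

Lemma minimal_pair S (P : rel X) x y : irreflexive S -> transitive S -> S x y -> P x y ->
  exists a b, [/\ S a b, P a b & forall c, S a c -> S c b -> ~~ P a c && ~~ P c b].
Proof.
move=> Sirr Str Sxy Pxy.
pose width (q : X * X) := #|[pred z | S q.1 z && S z q.2]|.
have xy_pair : [pred q : X * X | S q.1 q.2 && P q.1 q.2] (x, y) by rewrite /= Sxy Pxy.
case: (arg_minnP width xy_pair) => [[a b] /andP [Sab Pab] min_ab].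
exists a, b; split => // c Sac Scb.
have narrower u v : (forall z, S u z -> S z v -> S a z && S z b) -> ~~ (S u c && S c v) ->
    width (u, v) < width (a, b).
  move=> sub nc; apply: proper_card; apply/properP; split.
    by apply/subsetP => z /andP [Suz Szv]; apply: sub.
  by exists c; rewrite // inE /= Sac Scb.
apply/andP; split; apply/negP => Pc.
- have := min_ab (a, c); rewrite /= Sac Pc leqNgt => /(_ isT)/negP; apply.
  by apply: narrower; [move=> z -> Szc; rewrite (Str _ _ _ Szc Scb) | rewrite Sirr andbF].
- have := min_ab (c, b); rewrite /= Scb Pc leqNgt => /(_ isT)/negP; apply.
  by apply: narrower; [move=> z Scz ->; rewrite (Str _ _ _ Sac Scz) | rewrite Sirr].
Qed.

Lemma covers_tperm S a b x y :
  irreflexive S -> transitive S -> (forall x y, x != y -> S x y || S y x) ->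
  covers S a b -> (x, y) != (a, b) -> (x, y) != (b, a) ->
  S (tperm a b x) (tperm a b y) = S x y.
Proof.
move=> Sirr Str Stot /andP [Sab /forallP between].
have same_right c : a != c -> b != c -> S a c = S b c.
  move=> ac bc; apply/idP/idP => [Sac | /(Str _ _ _ Sab) //].
  by case/orP: (Stot _ _ bc) => // Scb; move: (between c); rewrite Sac Scb.
have same_left c : a != c -> b != c -> S c a = S c b.
  move=> ac bc; apply/idP/idP => [Sca | Scb]; first exact: Str Sca Sab.
  by case/orP: (Stot _ _ ac) => // Sac; move: (between c); rewrite Sac Scb.
have [<-|ax] := eqVneq a x; [rewrite tpermL | have [<-|bx] := eqVneq b x;
  [rewrite tpermR | rewrite (tpermD ax bx)]].
- have [<-|ay] := eqVneq a y; first by rewrite tpermL !Sirr.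
  have [<-|b_y] := eqVneq b y; first by rewrite eqxx.
  by rewrite (tpermD ay b_y) same_right.
- have [<-|ay] := eqVneq a y; first by rewrite eqxx.
  have [<-|b_y] := eqVneq b y; first by rewrite tpermR !Sirr.
  by rewrite (tpermD ay b_y) same_right.
- have [<-|ay] := eqVneq a y; first by rewrite tpermL same_left.
  have [<-|b_y] := eqVneq b y; first by rewrite tpermR same_left.
  by rewrite (tpermD ay b_y).
Qed.

Lemma irr_neq S x y : irreflexive S -> S x y -> x != y.
Proof. by move=> Sirr; apply: contraTneq => ->; rewrite Sirr. Qed.

Lemma strict_asym S x y : irreflexive S -> transitive S -> S x y -> ~~ S y x.
Proof. by move=> Sirr Str Sxy; apply/negP => /(Str _ _ _ Sxy); rewrite Sirr. Qed.

Lemma subrel_total_eq S T : (forall x y, x != y -> S x y || S y x) ->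
  irreflexive T -> transitive T -> subrel S T -> S =2 T.
Proof.
move=> Stot Tirr Ttr ST x y; apply/idP/idP => [/ST // | Txy].
case/orP: (Stot _ _ (irr_neq Tirr Txy)) => // /ST Tyx.
by move: (strict_asym Tirr Ttr Txy); rewrite Tyx.
Qed.

Lemma totalP Q : reflect (forall x y, x != y -> Q x y || Q y x) (totalb Q).
Proof.
apply: (iffP forallP) => [H x y | H x]; first by move: (H x) => /forallP/(_ y)/implyP.
by apply/forallP => y; apply/implyP; apply: H.
Qed.

Lemma ntotalP Q : ~~ totalb Q -> exists x y, unranked Q x y.
Proof.
move/forallPn => [x /forallPn [y]]; rewrite negb_imply negb_or => /andP [xy nQ].
by exists x, y; rewrite /unranked xy.
Qed.

Lemma unranked_sym Q x y : unranked Q x y = unranked Q y x.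
Proof. by rewrite /unranked eq_sym [~~ Q x y && _]andbC. Qed.

Lemma rankingP Q :
  reflect [/\ irreflexive Q, transitive Q & forall x y, x != y -> Q x y || Q y x] (ranking Q).
Proof.
rewrite /ranking /proto_ranking -andbA.
apply: (iffP and3P) => [[/forallP irr /forallP tr /totalP tot] | [irr tr /totalP tot]].
  split=> // [x | y x z Qxy Qyz]; first exact/negbTE/irr.
  by move: (tr x) => /forallP/(_ y)/forallP/(_ z)/implyP/(_ Qxy)/implyP/(_ Qyz).
split=> //; apply/forallP => x; first by rewrite irr.
by do 2![apply/forallP => ?]; do 2![apply/implyP => ?]; apply: tr; eassumption.
Qed.

Lemma tournamentP W : tournament W ->
  (forall x y, x != y -> W x y || W y x) /\ (forall x y, W x y -> ~~ W y x).
Proof.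
case/andP => /totalP tot /forallP asym; split=> // x y.
by move: (asym x) => /forallP/(_ y)/implyP.
Qed.

End Relations.

Section Steps.
Variable X : finType.
Implicit Types (S Q : rel X) (x y z : X) (p q : X * X) (h : seq (X * X)).

Definition step Q p : rel X :=
  fun x y => Q x y || ((x == p.1) || Q x p.1) && ((y == p.2) || Q p.2 y).

Lemma step_subrel Q p : subrel Q (step Q p).
Proof. by move=> x y Qxy; rewrite /step Qxy. Qed.

Lemma step_pair Q p : step Q p p.1 p.2.
Proof. by rewrite /step !eqxx orbT. Qed.

Lemma step_trans Q p : transitive Q -> transitive (step Q p).
Proof.
move=> Qtr y x z; rewrite /step.
case/orP => [Qxy | /andP [Hx Hy]]; case/orP => [Qyz | /andP [Hy' Hz]].
- by rewrite (Qtr _ _ _ Qxy Qyz).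
- case/orP: Hy' => [/eqP Ey | Qy1]; first by rewrite -Ey Qxy Hz !orbT.
  by rewrite (Qtr _ _ _ Qxy Qy1) Hz !orbT.
- case/orP: Hy => [/eqP Ey | Q2y]; first by rewrite Hx -Ey Qyz !orbT.
  by rewrite Hx (Qtr _ _ _ Q2y Qyz) !orbT.
- by rewrite Hx Hz orbT.
Qed.

Lemma step_min Q S p : transitive S -> subrel Q S -> S p.1 p.2 -> subrel (step Q p) S.
Proof.
move=> Str QS Sp x y /orP [/QS // | /andP [Hx Hy]].
have Sxp2 : S x p.2.
  by case/orP: Hx => [/eqP -> // | /QS Sxp1]; apply: Str Sxp1 Sp.
by case/orP: Hy => [/eqP -> // | /QS]; apply: Str Sxp2.
Qed.

Lemma tclose_min (E S : rel X) : transitive S -> subrel E S -> subrel (tclose E) S.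
Proof.
move=> Str ES x y /existsP [z /andP [/ES Sxz /connectP [s Es ->]]].
elim: s z Sxz Es => [|w s IH] z Sxz //= /andP [Ezw Es].
exact: IH (Str _ _ _ Sxz (ES _ _ Ezw)) Es.
Qed.

Lemma tclose_step Q p : transitive Q ->
  tclose (fun x y => Q x y || ((x, y) == p)) =2 step Q p.
Proof.
case: p => a b Qtr x y; set E := fun x y => _; apply/idP/idP.
  apply: tclose_min x y; first exact: step_trans.
  by move=> x y /orP [/step_subrel // | /eqP [-> ->]]; apply: step_pair.
have Eab : E a b by rewrite /E eqxx orbT.
have Cby : (y == b) || Q b y -> connect E b y.
  by case/orP => [/eqP -> | Qby]; [apply: connect0 | apply: connect1; rewrite /E Qby].
case/orP => [Qxy | /andP [/orP [/eqP -> | Qxa] /Cby Cb]]; apply/existsP.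
- by exists y; rewrite /E Qxy connect0.
- by exists b; rewrite Eab.
- by exists a; rewrite /E Qxa (connect_trans (connect1 Eab)).
Qed.

Lemma tclose_trans (E : rel X) : transitive (tclose E).
Proof.
move=> y x z /existsP [u /andP [Exu Cuy]] /existsP [v /andP [Eyv Cvz]].
apply/existsP; exists u; rewrite Exu /=.
exact: connect_trans Cuy (connect_trans (connect1 Eyv) Cvz).
Qed.

Lemma relh_trans h : transitive (relh h).
Proof. by case/lastP: h => [//|h p]; rewrite /relh foldl_rcons; apply: tclose_trans. Qed.

Lemma relh_rcons h p : relh (rcons h p) =2 step (relh h) p.
Proof. by rewrite /relh foldl_rcons; apply: tclose_step; apply: relh_trans. Qed.

Lemma step_irr Q p : transitive Q -> irreflexive Q -> unranked Q p.1 p.2 ->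
  irreflexive (step Q p).
Proof.
move=> Qtr Qirr /and3P [p12 nQ12 nQ21] x; rewrite /step Qirr /=.
apply/negP => /andP [/orP [/eqP x1 | Qx1] /orP [/eqP x2 | Q2x]].
- by move: p12; rewrite -x1 -x2 eqxx.
- by move: nQ21; rewrite -x1 Q2x.
- by move: nQ21; rewrite -x2 Qx1.
- by move: nQ21; rewrite (Qtr _ _ _ Q2x Qx1).
Qed.

Lemma covers_step Q p x y : covers (step Q p) x y -> (x, y) = p \/ covers Q x y.
Proof.
case: p => a b /andP [/orP [Qxy | /andP [Hx Hy]] /forallP between].
  right; rewrite /covers Qxy; apply/forallP => c; apply: contra (between c).
  by case/andP => Qxc Qcy; rewrite !step_subrel.
have [xa | xna] := eqVneq x a; have [yb | ynb] := eqVneq y b.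
- by left; rewrite xa yb.
- rewrite (negbTE ynb) /= in Hy.
  by move: (between b); rewrite /step /= xa Hy !eqxx !orbT.
- rewrite (negbTE xna) /= in Hx.
  by move: (between a); rewrite /step /= Hx yb !eqxx !orbT.
- rewrite (negbTE xna) /= in Hx.
  by move: (between a); rewrite /step /= Hx Hy !eqxx !orbT.
Qed.

End Steps.

Section Outcomes.
Variable X : finType.
Implicit Types (Q W : rel X) (x y : X) (p q : X * X) (h : seq (X * X)).

Lemma prefixes_rcons (P : seq (X * X) -> X * X -> Prop) h q :
  (forall h1 p h2, rcons h q = h1 ++ p :: h2 -> P h1 p) <->
  (forall h1 p h2, h = h1 ++ p :: h2 -> P h1 p) /\ P h q.
Proof.
split=> [H | [H1 Hq] h1 p h2].
  split; last by apply: (H h q [::]); rewrite cats1.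
  move=> h1 p h2 Eh; apply: (H h1 p (rcons h2 q)).
  by rewrite Eh rcons_cat rcons_cons.
case/lastP: h2 => [|h2 r]; first by rewrite cats1 => /rcons_inj [<- <-].
by rewrite -rcons_cons -rcons_cat => /rcons_inj [/H1].
Qed.

Lemma generated_rcons (s : strategy X) W h p :
  generated s W (rcons h p) <->
  generated s W h /\ ~~ totalb (relh h) /\ p = play W (s h).
Proof. exact: (prefixes_rcons (fun h p => ~~ totalb (relh h) /\ p = play W (s h))). Qed.

Lemma history_rcons h p :
  is_history (rcons h p) <->
  is_history h /\ ~~ totalb (relh h) && unranked (relh h) p.1 p.2.
Proof. exact: (prefixes_rcons (fun h p => ~~ totalb (relh h) && unranked (relh h) p.1 p.2)). Qed.

Lemma generated_ind (s : strategy X) W (P : seq (X * X) -> Prop) :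
  P [::] ->
  (forall h, generated s W h -> ~~ totalb (relh h) -> P h -> P (rcons h (play W (s h)))) ->
  forall h, generated s W h -> P h.
Proof.
move=> P0 Pstep; elim/last_ind => [// | h p IH] /generated_rcons [gen_h [ntot ->]].
exact: Pstep (IH gen_h).
Qed.

Lemma play_cases W q : play W q = q \/ play W q = (q.2, q.1).
Proof. by rewrite /play; case: ifP; [left | right]. Qed.

Lemma play_won W q : tournament W -> q.1 != q.2 -> W (play W q).1 (play W q).2.
Proof.
case/tournamentP => Wtot _ q12; rewrite /play; case: ifP => //= /negbT nW.
by move: (Wtot _ _ q12); rewrite (negbTE nW).
Qed.

Lemma unranked_play Q W q : unranked Q q.1 q.2 -> unranked Q (play W q).1 (play W q).2.
Proof. by case: (play_cases W q) => ->; rewrite // unranked_sym. Qed.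

Lemma generated_history (s : strategy X) W h :
  valid_strategy s -> generated s W h -> is_history h.
Proof.
move=> s_valid; apply: generated_ind => [|h' gen_h' ntot hist_h']; first by case.
apply/history_rcons; split=> //; rewrite ntot /=.
exact/unranked_play/s_valid.
Qed.

Lemma history_irreflexive h : is_history h -> irreflexive (relh h).
Proof.
elim/last_ind: h => [// | h p IH] /history_rcons [hist_h /andP [_ unr_p]] x.
by rewrite relh_rcons; apply: step_irr unr_p x; [apply: relh_trans | apply: IH].
Qed.

Lemma generated_covers_won (s : strategy X) W h x y :
  valid_strategy s -> tournament W -> generated s W h -> covers (relh h) x y -> W x y.
Proof.
move=> s_valid W_tour; move: h; apply: generated_ind => [/andP [] // | h gen_h ntot IH].
rewrite (eq_covers (relh_rcons _ _)) => /covers_step [xy_played | /IH //].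
have /and3P [s12 _ _] := s_valid _ (generated_history s_valid gen_h) ntot.
by have := play_won W_tour s12; rewrite -xy_played.
Qed.

Lemma feasible_ranking W R : feasible W R -> ranking R.
Proof.
case=> s [s_valid [h [gen_h [tot_h eq_h]]]].
apply/rankingP; split=> [x | y x z | x y].
- by rewrite -eq_h (history_irreflexive (generated_history s_valid gen_h)).
- by rewrite -!eq_h; apply: relh_trans.
- by rewrite -!eq_h; apply: (totalP _ tot_h).
Qed.

Lemma feasible_covers_won W R x y : tournament W -> feasible W R -> covers R x y -> W x y.
Proof.
move=> W_tour [s [s_valid [h [gen_h [_ eq_h]]]]].
by rewrite -(eq_covers eq_h); apply: generated_covers_won gen_h.
Qed.

Lemma aligned_feasible_subrel (pref W R R' : rel X) :
  (forall x y, x != y -> pref x y || pref y x) -> tournament W -> ranking R ->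
  efficient pref W R -> feasible W R' -> more_aligned pref R' R -> subrel R' R.
Proof.
move=> pref_tot W_tour /rankingP [Rirr Rtr Rtot] R_eff R'_feas aligned.
have /rankingP [R'irr R'tr _] := feasible_ranking R'_feas.
suff no_inversion x y : R' x y -> ~~ R y x.
  move=> x y R'xy; case/orP: (Rtot _ _ (irr_neq R'irr R'xy)) => // Ryx.
  by move: (no_inversion _ _ R'xy); rewrite Ryx.
move=> R'xy; apply/negP => Ryx.
have [a [b [R'ab Rba between]]] :=
  minimal_pair (P := fun x y => R y x) R'irr R'tr R'xy Ryx.
have [/existsP [c /andP [R'ac R'cb]] | no_between] := boolP [exists c, R' a c && R' c b].
  case/andP: (between c R'ac R'cb) => nRca nRbc.
  case/orP: (Rtot _ _ (irr_neq R'irr R'ac)) => [Rac | Rca]; last by rewrite Rca in nRca.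
  by rewrite (Rtr _ _ _ Rba Rac) in nRbc.
have /(feasible_covers_won W_tour R'_feas) Wab : covers R' a b.
  by rewrite /covers R'ab -negb_exists.
case/orP: (pref_tot _ _ (irr_neq R'irr R'ab)) => [Pab | Pba].
  by move: Rba; rewrite (negbTE (strict_asym Rirr Rtr (R_eff _ _ Pab Wab))).
by move: R'ab; rewrite (negbTE (strict_asym R'irr R'tr (aligned _ _ Pba Rba))).
Qed.

Lemma efficient_unimprovable (pref W R : rel X) :
  (forall x y, x != y -> pref x y || pref y x) -> tournament W -> ranking R ->
  efficient pref W R -> unimprovable pref W R.
Proof.
move=> pref_tot W_tour R_rank R_eff R' R'_feas aligned.
have /rankingP [Rirr Rtr _] := R_rank.
have /rankingP [_ _ R'tot] := feasible_ranking R'_feas.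
apply: subrel_total_eq R'tot Rirr Rtr _.
exact: aligned_feasible_subrel pref_tot W_tour R_rank R_eff R'_feas aligned.
Qed.

Lemma generated_total (s : strategy X) W (P : seq (X * X) -> Prop) :
  P [::] ->
  (forall h, P h -> ~~ totalb (relh h) ->
     unranked (relh h) (s h).1 (s h).2 /\ P (rcons h (play W (s h)))) ->
  exists h, [/\ generated s W h, totalb (relh h) & P h].
Proof.
move=> P0 Pstep; pose unranked_count h := #|[pred q : X * X | ~~ relh h q.1 q.2]|.
have count_rcons h p : unranked (relh h) p.1 p.2 ->
    unranked_count (rcons h p) < unranked_count h.
  case/and3P=> _ n12 _; apply: proper_card; apply/properP; split.
    by apply/subsetP => q; rewrite !inE; apply: contra; rewrite relh_rcons; apply: step_subrel.
  by exists p; rewrite !inE ?negbK ?relh_rcons ?step_pair.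
suff gen_total n h : unranked_count h < n -> generated s W h -> P h ->
    exists h', [/\ generated s W h', totalb (relh h') & P h'].
  by apply: (gen_total _ [::] (ltnSn _)) => // - [].
elim: n h => [// | n IH] h count_h gen_h Ph.
have [tot | ntot] := boolP (totalb (relh h)); first by exists h.
have [unr Ph'] := Pstep h Ph ntot.
apply: IH Ph'; first exact: leq_trans (count_rcons _ _ (unranked_play W unr)) count_h.
exact/generated_rcons.
Qed.

End Outcomes.

Section Completion.
Variables (X : finType) (pref : rel X).
Hypotheses (pref_irr : irreflexive pref) (pref_trans : transitive pref)
  (pref_total : forall x y, x != y -> pref x y || pref y x).
Implicit Types (Q L : rel X) (x y : X) (p q : X * X).

Definition completion Q : rel X := fun x y => Q x y || ~~ Q y x && pref x y.

Definition coherent Q := irreflexive (completion Q) /\ transitive (completion Q).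

Definition adjacent Q p := unranked Q p.1 p.2 && covers (completion Q) p.1 p.2.

Lemma subrel_completion Q : subrel Q (completion Q).
Proof. by move=> x y Qxy; rewrite /completion Qxy. Qed.

Lemma completion_pref Q x y : completion Q x y -> ~~ Q x y -> pref x y.
Proof. by case/orP=> [-> // | /andP []]. Qed.

Lemma completion_total Q x y : x != y -> completion Q x y || completion Q y x.
Proof.
rewrite /completion => xy; case: (Q x y) (Q y x) => [|] [|] //=.
exact: pref_total.
Qed.

Lemma eq_coherent Q Q' : Q =2 Q' -> coherent Q <-> coherent Q'.
Proof.
move=> E; have EL : completion Q =2 completion Q' by move=> x y; rewrite /completion !E.
split=> -[Lirr Ltr]; split=> [x | y x z].
- by rewrite -EL.
- by rewrite -!EL; apply: Ltr.
- by rewrite EL.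
- by rewrite !EL; apply: Ltr.
Qed.

Lemma coherent_nil : coherent (relh [::]).
Proof. by split=> [x | y x z]; rewrite /completion /=; [apply: pref_irr | apply: pref_trans]. Qed.

Lemma completion_ranked Q x y : coherent Q -> completion Q x y -> ~~ unranked Q x y -> Q x y.
Proof.
move=> [Lirr Ltr] Lxy; rewrite /unranked (irr_neq Lirr Lxy) /= negb_and !negbK.
case/orP=> // /subrel_completion Lyx.
by move: (strict_asym Lirr Ltr Lxy); rewrite Lyx.
Qed.

Lemma completion_eq Q L : irreflexive L -> transitive L -> subrel Q L ->
  (forall x y, x != y -> ~~ Q x y -> ~~ Q y x -> L x y = pref x y) -> completion Q =2 L.
Proof.
move=> Lirr Ltr QL L_pref x y; rewrite /completion.
have [Qxy | nQxy] := boolP (Q x y); first by rewrite QL.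
have [Qyx | nQyx] := boolP (Q y x); first by rewrite (negbTE (strict_asym Lirr Ltr (QL _ _ Qyx))).
have [<- | xy] := eqVneq x y; first by rewrite pref_irr Lirr.
by rewrite L_pref.
Qed.

Lemma coherent_step Q q (sigma : {perm X}) :
  coherent Q -> unranked Q q.1 q.2 ->
  (forall x y, (x, y) != q -> (x, y) != (q.2, q.1) ->
     completion Q (sigma x) (sigma y) = completion Q x y) ->
  completion Q (sigma q.1) (sigma q.2) ->
  coherent (step Q q) /\ (forall x y, step Q q x y -> ~~ Q x y -> (x, y) != q -> pref x y).
Proof.
case: q => a b /= [Lirr Ltr] /and3P [_ nQab nQba] L_off Lab.
(* The completion of [step Q (a, b)] is the completion of [Q] relabelled by [sigma]. *)
pose L' x y := completion Q (sigma x) (sigma y).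
have L'irr : irreflexive L' by move=> x; apply: Lirr.
have L'tr : transitive L' by move=> y x z; apply: Ltr.
have QL' : subrel Q L'.
  move=> x y Qxy; rewrite /L' L_off ?subrel_completion //.
    by apply: contraTneq Qxy => [[-> ->]].
  by apply: contraTneq Qxy => [[-> ->]].
have stepL' : subrel (step Q (a, b)) L' := step_min (p := (a, b)) L'tr QL' Lab.
have off_q x y : ~~ step Q (a, b) x y -> ~~ step Q (a, b) y x ->
    (x, y) != (a, b) /\ (x, y) != (b, a).
  move=> nxy nyx; split.
    by apply: contraNneq nxy => -[-> ->]; apply: (step_pair Q (a, b)).
  by apply: contraNneq nyx => -[-> ->]; apply: (step_pair Q (a, b)).
have E : completion (step Q (a, b)) =2 L'.
  apply: completion_eq => // x y xy nxy nyx; have [nq nrq] := off_q x y nxy nyx.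
  have nQxy : ~~ Q x y by apply: contra nxy; apply: step_subrel.
  have nQyx : ~~ Q y x by apply: contra nyx; apply: step_subrel.
  by rewrite /L' L_off // /completion (negbTE nQxy) (negbTE nQyx).
split=> [|x y Sxy nQxy nq].
  by split=> [x | y x z]; rewrite ?E; [apply: L'irr | apply: L'tr].
have nba : (x, y) != (b, a).
  by apply: contraTneq (stepL' _ _ Sxy) => [[-> ->]]; apply: strict_asym Lab.
by apply: completion_pref nQxy; rewrite -L_off //; apply: stepL'.
Qed.

Lemma coherent_adjacent_step Q p q :
  coherent Q -> adjacent Q p -> (q = p \/ q = (p.2, p.1)) ->
  coherent (step Q q) /\ (forall x y, step Q q x y -> ~~ Q x y -> (x, y) != q -> pref x y).
Proof.
move=> Qcoh /andP [unr_p /andP [Lp Lcov]] [-> | ->].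
  by apply: (coherent_step (sigma := 1)) => // [x y _ _|]; rewrite !perm1.
have [Lirr Ltr] := Qcoh.
apply: (coherent_step (sigma := tperm p.1 p.2)) => //=; first by rewrite unranked_sym.
- move=> x y nrp np; apply: covers_tperm => //; first exact: completion_total.
  exact/andP.
- by rewrite tpermR tpermL.
Qed.

Lemma exists_adjacent Q : transitive Q -> coherent Q -> ~~ totalb Q -> exists p, adjacent Q p.
Proof.
move=> Qtr Qcoh /ntotalP [x0 [y0 unr0]]; have [Lirr Ltr] := Qcoh.
have [x [y [Lxy unr_xy]]] : exists x y, completion Q x y /\ unranked Q x y.
  case/and3P: (unr0) => xy _ _; case/orP: (completion_total Q xy) => L0.
    by exists x0, y0.
  by exists y0, x0; rewrite unranked_sym.
have [a [b [Lab unr_ab between]]] := minimal_pair Lirr Ltr Lxy unr_xy.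
exists (a, b); rewrite /adjacent /covers /= unr_ab Lab /=; apply/forallP => c.
apply/negP => /andP [Lac Lcb]; have /andP [ac cb] := between c Lac Lcb.
move: unr_ab; rewrite /unranked.
by rewrite (Qtr _ _ _ (completion_ranked Qcoh Lac ac) (completion_ranked Qcoh Lcb cb)) andbF.
Qed.

End Completion.

Section BubbleStrategy.
Variables (X : finType) (pref W R : rel X) (default : X * X).
Hypotheses (pref_irr : irreflexive pref) (pref_trans : transitive pref)
  (pref_total : forall x y, x != y -> pref x y || pref y x).
Implicit Types (Q : rel X) (h : seq (X * X)) (p : X * X).

Definition agreeing Q p := adjacent pref Q p && R (play W p).1 (play W p).2.

(* The second branch serves tournaments other than W. The third keeps the strategy valid at
   histories it does not generate itself, and [default] is only offered at terminal histories. *)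
Definition bubble_strategy : strategy X := fun h =>
  let Q := relh h in
  if [pick p | agreeing Q p] is Some p then p else
  if [pick p | adjacent pref Q p] is Some p then p else
  if [pick p | unranked Q p.1 p.2] is Some p then p else default.

Lemma bubble_unranked h : ~~ totalb (relh h) ->
  unranked (relh h) (bubble_strategy h).1 (bubble_strategy h).2.
Proof.
move=> /ntotalP [x [y unr_xy]]; rewrite /bubble_strategy.
case: pickP => [p /andP [/andP [] //] | _].
case: pickP => [p /andP [] // | _].
by case: pickP => [// | /(_ (x, y))]; rewrite unr_xy.
Qed.

Lemma bubble_valid : valid_strategy bubble_strategy.
Proof. by move=> h _; apply: bubble_unranked. Qed.

Lemma bubble_adjacent h : coherent pref (relh h) -> ~~ totalb (relh h) ->
  adjacent pref (relh h) (bubble_strategy h).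
Proof.
move=> coh ntot; rewrite /bubble_strategy.
case: pickP => [p /andP [] // | _].
case: pickP => [// | none].
have [p adj_p] := exists_adjacent pref_total (@relh_trans _ h) coh ntot.
by move: (none p); rewrite adj_p.
Qed.

Lemma bubble_step W' h : coherent pref (relh h) -> ~~ totalb (relh h) ->
  coherent pref (relh (rcons h (play W' (bubble_strategy h)))) /\
  (forall x y, relh (rcons h (play W' (bubble_strategy h))) x y -> ~~ relh h x y ->
     (x, y) != play W' (bubble_strategy h) -> pref x y).
Proof.
move=> coh ntot.
have [coh' new] := coherent_adjacent_step pref_irr pref_total coh
  (bubble_adjacent coh ntot) (play_cases W' _).
split=> [|x y]; first exact/(eq_coherent _ (relh_rcons _ _)).
by rewrite relh_rcons; apply: new.
Qed.

Lemma bubble_against_pref_won W' h : tournament W' -> generated bubble_strategy W' h ->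
  coherent pref (relh h) /\ (forall x y, relh h y x -> pref x y -> W' y x).
Proof.
move=> W'_tour; move: h; apply: generated_ind => [|h _ ntot [coh won]].
  by split=> //; apply: coherent_nil.
have [coh' new] := bubble_step W' coh ntot.
split=> // x y Syx Pxy.
have [Qyx | nQyx] := boolP (relh h y x); first exact: won.
have [played | nq] := eqVneq (y, x) (play W' (bubble_strategy h)).
  have /and3P [s12 _ _] := bubble_unranked ntot.
  by have := play_won W'_tour s12; rewrite -played.
by move: (new _ _ Syx nQyx nq); rewrite (negbTE (strict_asym pref_irr pref_trans Pxy)).
Qed.

Lemma bubble_regret_free : regret_free pref bubble_strategy.
Proof.
move=> W' W'_tour R' out; have [h [gen_h [tot_h eq_h]]] := out.
have [_ won] := bubble_against_pref_won W'_tour gen_h.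
have [_ W'asym] := tournamentP W'_tour.
have R'_rank : ranking R'.
  by apply: (@feasible_ranking _ W'); exists bubble_strategy; split=> //; apply: bubble_valid.
apply: efficient_unimprovable => // x y Pxy W'xy; rewrite -eq_h.
case/orP: (totalP _ tot_h x y (irr_neq pref_irr Pxy)) => // Qyx.
by move: (W'asym _ _ W'xy); rewrite (won _ _ Qyx Pxy).
Qed.

Hypotheses (R_irr : irreflexive R) (R_trans : transitive R)
  (R_total : forall x y, x != y -> R x y || R y x)
  (R_efficient : efficient pref W R) (R_covers_won : forall x y, covers R x y -> W x y).

Lemma agreeing_of_disagreement Q x y : coherent pref Q -> subrel Q R ->
  completion pref Q x y -> R y x -> exists p, agreeing Q p.
Proof.
move=> [Lirr Ltr] QR Lxy Ryx.
have [a [b [Lab Rba between]]] := minimal_pair (P := fun x y => R y x) Lirr Ltr Lxy Ryx.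
have nQab : ~~ Q a b by apply: contraL Rba => /QR; apply: strict_asym R_irr R_trans.
have nQba : ~~ Q b a.
  by apply: contraL Lab => /(subrel_completion pref); apply: strict_asym Lirr Ltr.
have nWab : ~~ W a b.
  apply: contraL Rba => /(R_efficient (completion_pref Lab nQab)).
  exact: strict_asym R_irr R_trans.
exists (a, b); rewrite /agreeing /adjacent /covers /play /= (negbTE nWab) Rba Lab.
rewrite /unranked (irr_neq Lirr Lab) nQab nQba /= andbT; apply/forallP => c.
apply/negP => /andP [Lac Lcb]; case/andP: (between c Lac Lcb) => nRca nRbc.
case/orP: (R_total (irr_neq Lirr Lac)) => [Rac | Rca]; last by rewrite Rca in nRca.
by rewrite (R_trans Rba Rac) in nRbc.
Qed.

Lemma agreeing_of_unranked Q x y : transitive Q -> coherent pref Q -> subrel Q R ->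
  subrel (completion pref Q) R -> R x y -> ~~ Q x y -> exists p, agreeing Q p.
Proof.
move=> Qtr [Lirr Ltr] QR LR Rxy nQxy.
have [a [b [Rab nQab between]]] :=
  minimal_pair (P := fun x y => ~~ Q x y) R_irr R_trans Rxy nQxy.
have cov_ab : covers R a b.
  rewrite /covers Rab; apply/forallP => c; apply/negP => /andP [Rac Rcb].
  case/andP: (between c Rac Rcb); rewrite !negbK => Qac Qcb.
  by rewrite (Qtr _ _ _ Qac Qcb) in nQab.
have ab := irr_neq R_irr Rab.
have Lab : completion pref Q a b.
  case/orP: (completion_total pref_total Q ab) => // /LR Rba.
  by move: (strict_asym R_irr R_trans Rab); rewrite Rba.
exists (a, b); rewrite /agreeing /adjacent /covers /play /= (R_covers_won cov_ab) Rab Lab.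
rewrite /unranked ab nQab /= andbT; apply/andP; split.
  by apply: contraL Rab => /QR; apply: strict_asym R_irr R_trans.
apply/forallP => c; apply/negP => /andP [/LR Rac /LR Rcb].
by case/andP: cov_ab => _ /forallP/(_ c); rewrite Rac Rcb.
Qed.

Lemma exists_agreeing Q : transitive Q -> coherent pref Q -> subrel Q R -> ~~ totalb Q ->
  exists p, agreeing Q p.
Proof.
move=> Qtr coh QR /ntotalP [x [y /and3P [xy nQxy nQyx]]].
have [/existsP [u /existsP [v /andP [Luv Rvu]]] | agree] :=
  boolP [exists u, exists v, completion pref Q u v && R v u].
  exact: agreeing_of_disagreement Luv Rvu.
have LR : subrel (completion pref Q) R.
  move=> u v Luv; have [Lirr _] := coh.
  case/orP: (R_total (irr_neq Lirr Luv)) => // Rvu; case/negP: agree.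
  by apply/existsP; exists u; apply/existsP; exists v; rewrite Luv.
by case/orP: (R_total xy) => [Rxy | Ryx]; [apply: agreeing_of_unranked Rxy nQxy |
  apply: agreeing_of_unranked Ryx nQyx].
Qed.

Lemma bubble_agreeing h : coherent pref (relh h) -> subrel (relh h) R ->
  ~~ totalb (relh h) -> agreeing (relh h) (bubble_strategy h).
Proof.
move=> coh QR ntot; rewrite /bubble_strategy.
case: pickP => [// | none].
have [p agr_p] := exists_agreeing (@relh_trans _ h) coh QR ntot.
by move: (none p); rewrite agr_p.
Qed.

Lemma bubble_outcome : outcome bubble_strategy W R.
Proof.
have [h [gen_h tot_h [_ QR]]] : exists h, [/\ generated bubble_strategy W h, totalb (relh h) &
    coherent pref (relh h) /\ subrel (relh h) R].
  apply: generated_total => [|h [coh QR] ntot]; first by split=> //; apply: coherent_nil.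
  have /andP [_ Rq] := bubble_agreeing coh QR ntot.
  split; first exact: bubble_unranked.
  split; first by have [] := bubble_step W coh ntot.
  by move=> x y; rewrite relh_rcons; apply: (step_min R_trans QR Rq).
exists h; split=> //; split=> //.
exact: subrel_total_eq (totalP _ tot_h) R_irr R_trans QR.
Qed.

End BubbleStrategy.

Theorem proposition1 (X : finType) (pref : rel X) (Hpref : ranking pref)
  (W : rel X) (HW : tournament W) (R : rel X) (HR : ranking R)
  (Hfeas : feasible W R) (Heff : efficient pref W R) :
  exists s : strategy X,
    valid_strategy s /\ regret_free pref s /\ outcome s W R.
Proof.
have [s0 _] := Hfeas.
have /rankingP [Pirr Ptr Ptot] := Hpref.
have /rankingP [Rirr Rtr Rtot] := HR.
exists (bubble_strategy pref W R (s0 [::])); split; [|split].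
- exact: bubble_valid.
- exact: bubble_regret_free.
- by apply: bubble_outcome => // x y; apply: feasible_covers_won.
Qed.
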